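(* Let $n\ge 1$. Write vectors of $\mathbb{R}^n$ as $x=(x_0,\dots,x_{n-1})$. Let $B:\mathbb{R}^n\times\mathbb{R}^n\to\mathbb{R}^{2n}$ be the symmetric bilinear map whose first component is $0$ and whose $(k+2)$-th component, for $k=0,1,\dots,2n-2$, is $\sum_{i+j=k} x_iy_j$ (sum over $0\le i,j\le n-1$). Let $C:\mathbb{R}^n\times\mathbb{R}^n\times\mathbb{R}^n\to\mathbb{R}^{2n}$ be the symmetric trilinear map $$C(x,y,z) = (x_0y_0z_0,\ x_1y_1z_1,\ \dots,\ x_{n-1}y_{n-1}z_{n-1},\ 0,\dots,0).$$ Define $f:\mathbb{R}^n\to\mathbb{R}^n\times\mathbb{R}^{2n}=\mathbb{R}^{3n}$ by $f(x) = \left(x,\ \tfrac12 B(x,x)+\tfrac16 C(x,x,x)\right)$. Then $f$ satisfies the local condition at $x=0$: every solution $(v_1,v_2,v_3,\lambda)\in\mathbb{R}^n\times\mathbb{R}^n\times\mathbb{R}^n\times\mathbb{R}$ of $Df_0(v_1)+D^2f_0(v_2,v_3)+\lambda D^3f_0(v_3,v_3,v_3)=0$ with $v_3\neq 0$ has $v_1=0$, $v_2=0$, $\lambda=0$.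
   Context: For a smooth $f:\mathbb{R}^n\to\mathbb{R}^N$ and $a\in\mathbb{R}^n$, $D^kf_a$ denotes the symmetric $k$-linear map $(\mathbb{R}^n)^k\to\mathbb{R}^N$ of $k$-th order partial derivatives, defined on the standard basis by $D^kf_a(e_{i_1},\dots,e_{i_k}) = \frac{\partial^k f}{\partial x_{i_1}\cdots\partial x_{i_k}}(a)$; $D^1f_a=Df_a$. *)

From HB Require Import structures.
From mathcomp Require Import all_boot all_order all_algebra.
From mathcomp Require Import all_classical all_reals all_analysis.
Set Implicit Arguments. Unset Strict Implicit. Unset Printing Implicit Defensive.
Import Order.TTheory GRing.Theory Num.Theory.
Import numFieldNormedType.Exports.
Local Open Scope ring_scope.

Section Defs.
Variable R : realType.

Definition std_basis (n : nat) (i : 'I_n) : 'rV[R]_n := delta_mx 0 i.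

Definition partial_deriv (n m : nat) (f : 'rV[R]_n -> 'rV[R]_m) (i : 'I_n)
  : 'rV[R]_n -> 'rV[R]_m :=
  fun x => derive f x (std_basis i).

(* iterated partial_deriv derivative d^k f / (d x_{i_1} ... d x_{i_k}),
   for s = [:: i_1; ...; i_k]  (x_{i_k} is differentiated first) *)
Definition iter_partial_deriv (n m : nat) (f : 'rV[R]_n -> 'rV[R]_m) (s : seq 'I_n)
  : 'rV[R]_n -> 'rV[R]_m :=
  foldr (fun i g => partial_deriv g i) f s.

(* D^k f_a (v_1, ..., v_k), k = size vs, vs = [:: v_1; ...; v_k]: the k-linear
   map whose value on basis vectors (e_{i_1},...,e_{i_k}) is the k-th order
   partial_deriv derivative, extended multilinearly. *)
Definition Dkf (n m : nat) (f : 'rV[R]_n -> 'rV[R]_m) (a : 'rV[R]_n)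
  (vs : seq 'rV[R]_n) : 'rV[R]_m :=
  \sum_(t : (size vs).-tuple 'I_n)
     (\prod_(j < size vs) (nth 0 vs j) 0 (tnth t j)) *: iter_partial_deriv f t a.

(* B : R^n x R^n -> R^{2n}: component 0 (the "first" component) is 0, and
   component k+1 (the "(k+2)-th" component), k = 0..2n-2, is
   sum_{i+j=k} x_i y_j. *)
Definition thm_B (n : nat) (x y : 'rV[R]_n) : 'rV[R]_(n + n) :=
  \row_(m < n + n)
    (if val m == 0%N then 0
     else \sum_(i < n) \sum_(j < n | (val i + val j)%N == (val m).-1) x 0 i * y 0 j).

Definition thm_C (n : nat) (x y z : 'rV[R]_n) : 'rV[R]_(n + n) :=
  row_mx (\row_(i < n) (x 0 i * y 0 i * z 0 i)) 0.

Definition thm_f (n : nat) (x : 'rV[R]_n) : 'rV[R]_(n + (n + n)) :=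
  row_mx x (2^-1 *: thm_B x x + 6^-1 *: thm_C x x x).

End Defs.

From HB Require Import structures.
From mathcomp Require Import all_boot all_order all_algebra.
From mathcomp Require Import all_classical all_reals all_analysis.
From mathcomp Require Import ring zify.
Set Implicit Arguments.
Unset Strict Implicit.
Unset Printing Implicit Defensive.

Import Order.TTheory GRing.Theory Num.Theory.
Import numFieldNormedType.Exports.
Local Open Scope classical_set_scope.
Local Open Scope ring_scope.

(* f is a cubic polynomial map, so its iterated partial derivatives at 0 are
   read off its coefficients: D f_0 v = (v, 0), D^2 f_0 (u, v) = (0, B(u, v))
   and D^3 f_0 (v, v, v) = (0, C(v, v, v)).  The equation thus splits into
   v1 = 0 and B(v2, v3) + lam C(v3, v3, v3) = 0.  The nonzero coordinates of
   B(u, v) are the coefficients of the product of u(X) = sum u_i X^i and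
   v(X) = sum v_j X^j.  At the index j0 of the first nonzero coordinate of v3
   the B-part vanishes, leaving lam v3_j0^3 = 0; with lam = 0 the product
   v2(X) v3(X) vanishes, so v2 = 0 because R[X] is a domain. *)

Lemma derive_of_cubic_expansion (R : realType) (V W : normedModType R)
    (f : V -> W) x v (a b c : W) :
  (forall h : R, f (h *: v + x) = f x + h *: a + h ^+ 2 *: b + h ^+ 3 *: c) ->
  derive f x v = a.
Proof.
move=> fE; rewrite /derive; apply: cvg_lim => //.
apply: (@cvg_trans _ ((fun h : R => a + h *: b + h ^+ 2 *: c) @ 0^')).
  apply: near_eq_cvg; near=> h; rewrite /= fE.
  have h_neq0 : h != 0 by near: h; exact: nbhs_dnbhs_neq.
  have -> : f x + h *: a + h ^+ 2 *: b + h ^+ 3 *: c - f x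
          = h *: (a + h *: b + h ^+ 2 *: c).
    by rewrite !scalerDr !scalerA -expr2 -exprS addrC !addrA addNr add0r.
  by rewrite scalerA mulVf // scale1r.
suff : (fun h : R => a + h *: b + h ^+ 2 *: c) @ 0^' --> a + 0 *: b + 0 ^+ 2 *: c.
  by rewrite scale0r expr2 mul0r scale0r !addr0.
apply: cvgD; first apply: cvgD; first exact: cvg_cst.
  by apply: cvgZ; [exact: cvg_within | exact: cvg_cst].
apply: cvgZ; last exact: cvg_cst.
rewrite expr2; under eq_fun do rewrite expr2.
by apply: cvgM; exact: cvg_within.
Unshelve. all: by end_near.
Qed.

Lemma std_basisE (R : realType) n (i j : 'I_n) : std_basis R i 0 j = (i == j)%:R.
Proof. by rewrite mxE eqxx eq_sym. Qed.

Lemma sum_mulr_std_basis (R : realType) n (F : 'I_n -> R) (l : 'I_n) :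
  \sum_i F i * std_basis R l 0 i = F l.
Proof.
rewrite (bigD1 l) //= std_basisE eqxx mulr1 big1 ?addr0 // => i /negbTE li.
by rewrite std_basisE eq_sym li mulr0.
Qed.

Lemma std_basisC (R : realType) n (i j : 'I_n) : std_basis R i 0 j = std_basis R j 0 i.
Proof. by rewrite !std_basisE eq_sym. Qed.

Lemma sum_std_basis_mulr (R : realType) n (F : 'I_n -> R) (l : 'I_n) :
  \sum_i std_basis R l 0 i * F i = F l.
Proof. by under eq_bigr do rewrite mulrC; exact: sum_mulr_std_basis. Qed.

Section CubicMap.
Variables (R : realType) (n M : nat).
Implicit Types (x v : 'rV[R]_n) (a : 'rV[R]_M) (L : 'I_n -> 'rV[R]_M)
  (Q : 'I_n -> 'I_n -> 'rV[R]_M) (T : 'I_n -> 'I_n -> 'I_n -> 'rV[R]_M).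

Definition cubic_map a L Q T x : 'rV[R]_M :=
  \row_m (a 0 m + \sum_i x 0 i * L i 0 m + \sum_i \sum_j x 0 i * x 0 j * Q i j 0 m
     + \sum_i \sum_j \sum_k x 0 i * x 0 j * x 0 k * T i j k 0 m).

Definition cubic_map_dir L Q T x v : 'rV[R]_M :=
  \row_m (\sum_i v 0 i * L i 0 m
     + \sum_i \sum_j (v 0 i * x 0 j + x 0 i * v 0 j) * Q i j 0 m
     + \sum_i \sum_j \sum_k (v 0 i * x 0 j * x 0 k + x 0 i * v 0 j * x 0 k
                             + x 0 i * x 0 j * v 0 k) * T i j k 0 m).

Lemma derive_cubic_map a L Q T x v :
  derive (cubic_map a L Q T) x v = cubic_map_dir L Q T x v.
Proof.
pose b := \row_m (\sum_i \sum_j v 0 i * v 0 j * Q i j 0 m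
  + \sum_i \sum_j \sum_k (v 0 i * v 0 j * x 0 k + v 0 i * x 0 j * v 0 k
                          + x 0 i * v 0 j * v 0 k) * T i j k 0 m) : 'rV[R]_M.
pose c := \row_m (\sum_i \sum_j \sum_k v 0 i * v 0 j * v 0 k * T i j k 0 m) : 'rV[R]_M.
apply: (@derive_of_cubic_expansion _ _ _ _ _ _ _ b c) => h.
apply/rowP => m; rewrite !mxE.
have hvxE i : (h *: v + x) 0 i = h * v 0 i + x 0 i by rewrite !mxE.
have linE : \sum_i (h *: v + x) 0 i * L i 0 m
    = \sum_i x 0 i * L i 0 m + h * \sum_i v 0 i * L i 0 m.
  by rewrite mulr_sumr -big_split; apply: eq_bigr => i _ /=; rewrite hvxE; ring.
have quadE : \sum_i \sum_j (h *: v + x) 0 i * (h *: v + x) 0 j * Q i j 0 m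
    = \sum_i \sum_j x 0 i * x 0 j * Q i j 0 m
    + h * \sum_i \sum_j (v 0 i * x 0 j + x 0 i * v 0 j) * Q i j 0 m
    + h ^+ 2 * \sum_i \sum_j v 0 i * v 0 j * Q i j 0 m.
  rewrite !mulr_sumr -!big_split; apply: eq_bigr => i _ /=.
  rewrite !mulr_sumr -!big_split; apply: eq_bigr => j _ /=; rewrite !hvxE; ring.
have cubE : \sum_i \sum_j \sum_k
      (h *: v + x) 0 i * (h *: v + x) 0 j * (h *: v + x) 0 k * T i j k 0 m
    = \sum_i \sum_j \sum_k x 0 i * x 0 j * x 0 k * T i j k 0 m
    + h * \sum_i \sum_j \sum_k (v 0 i * x 0 j * x 0 k + x 0 i * v 0 j * x 0 k
                                + x 0 i * x 0 j * v 0 k) * T i j k 0 m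
    + h ^+ 2 * \sum_i \sum_j \sum_k (v 0 i * v 0 j * x 0 k + v 0 i * x 0 j * v 0 k
                                     + x 0 i * v 0 j * v 0 k) * T i j k 0 m
    + h ^+ 3 * \sum_i \sum_j \sum_k v 0 i * v 0 j * v 0 k * T i j k 0 m.
  rewrite !mulr_sumr -!big_split; apply: eq_bigr => i _ /=.
  rewrite !mulr_sumr -!big_split; apply: eq_bigr => j _ /=.
  rewrite !mulr_sumr -!big_split; apply: eq_bigr => k _ /=; rewrite !hvxE; ring.
by rewrite linE quadE cubE; ring.
Qed.

Lemma partial_cubic_map a L Q T l :
  partial_deriv (cubic_map a L Q T) l =
  cubic_map (L l) (fun i => Q l i + Q i l)
    (fun i j => T l i j + T i l j + T i j l) (fun _ _ _ => 0).
Proof.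
apply/funext => x; rewrite /partial_deriv derive_cubic_map.
apply/rowP => m; rewrite !mxE sum_std_basis_mulr.
set d := std_basis R l.
have cub0 : \sum_i \sum_j \sum_k x 0 i * x 0 j * x 0 k * 0 = 0 :> R.
  by rewrite big1 // => i _; rewrite big1 // => j _; rewrite big1 // => k _; rewrite mulr0.
rewrite cub0 addr0; congr (_ + _ + _).
  transitivity (\sum_i d 0 i * (\sum_j x 0 j * Q i j 0 m)
                + \sum_i x 0 i * (\sum_j d 0 j * Q i j 0 m)).
    rewrite -big_split; apply: eq_bigr => i _ /=; rewrite !mulr_sumr -big_split.
    by apply: eq_bigr => j _ /=; ring.
  rewrite sum_std_basis_mulr; under [X in _ + X]eq_bigr do rewrite sum_std_basis_mulr.
  by rewrite -big_split; apply: eq_bigr => i _ /=; rewrite !mxE; ring.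
transitivity (\sum_i d 0 i * (\sum_j \sum_k x 0 j * x 0 k * T i j k 0 m)
  + \sum_i x 0 i * (\sum_j d 0 j * (\sum_k x 0 k * T i j k 0 m))
  + \sum_i x 0 i * (\sum_j x 0 j * (\sum_k d 0 k * T i j k 0 m))).
  rewrite -!big_split; apply: eq_bigr => i _ /=; rewrite !mulr_sumr -!big_split.
  apply: eq_bigr => j _ /=; rewrite !mulr_sumr -!big_split.
  by apply: eq_bigr => k _ /=; ring.
rewrite sum_std_basis_mulr; under [X in _ + X + _]eq_bigr do rewrite sum_std_basis_mulr.
under [X in _ + X]eq_bigr do under eq_bigr do rewrite sum_std_basis_mulr.
rewrite -!big_split; apply: eq_bigr => i _ /=; rewrite !mulr_sumr -!big_split.
by apply: eq_bigr => j _ /=; rewrite !mxE; ring.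
Qed.

Lemma cubic_map0 a L Q T : cubic_map a L Q T 0 = a.
Proof.
apply/rowP => m; rewrite !mxE.
rewrite big1 => [|i _]; last by rewrite mxE mul0r.
rewrite big1 => [|i _]; last by rewrite big1 // => j _; rewrite !mxE !mul0r.
rewrite big1 => [|i _]; last by rewrite !big1 // => *; rewrite ?big1 // => *; rewrite !mxE !mul0r.
by rewrite !addr0.
Qed.

End CubicMap.

Lemma sum_tupleS (V : nmodType) (I : finType) k (F : k.+1.-tuple I -> V) :
  \sum_(t : k.+1.-tuple I) F t = \sum_(i : I) \sum_(t : k.-tuple I) F [tuple of i :: t].
Proof.
rewrite pair_big /= (reindex (fun p : I * k.-tuple I => [tuple of p.1 :: p.2])) //=.
apply: onW_bij; exists (fun t : k.+1.-tuple I => (thead t, behead_tuple t)).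
  by case=> i t /=; rewrite theadE; congr pair; apply: val_inj.
by move=> t; apply: val_inj; case: t => [[|x s] Hs].
Qed.

Lemma sum_tuple0 (V : nmodType) (I : finType) (F : 0.-tuple I -> V) :
  \sum_(t : 0.-tuple I) F t = F [tuple].
Proof. by rewrite (big_pred1 [tuple]) // => t; rewrite [t]tuple0 /= eqxx. Qed.

Section CubicMapDerivatives.
Variables (R : realType) (n M : nat).
Variables (a : 'rV[R]_M) (L : 'I_n -> 'rV[R]_M)
  (Q : 'I_n -> 'I_n -> 'rV[R]_M) (T : 'I_n -> 'I_n -> 'I_n -> 'rV[R]_M).
Hypothesis Q_sym : forall i j, Q i j = Q j i.
Hypotheses (T_sym12 : forall i j k, T i j k = T j i k)
           (T_sym23 : forall i j k, T i j k = T i k j).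

Lemma Dkf1_cubic_map (u : 'rV[R]_n) :
  Dkf (cubic_map a L Q T) 0 [:: u] = \row_m \sum_i u 0 i * L i 0 m.
Proof.
apply/rowP => m; rewrite /Dkf sum_tupleS summxE !mxE; apply: eq_bigr => i _.
rewrite sum_tuple0 mxE big_ord1 /iter_partial_deriv /=.
by rewrite partial_cubic_map cubic_map0 tnth0.
Qed.

Lemma Dkf2_cubic_map (u v : 'rV[R]_n) :
  Dkf (cubic_map a L Q T) 0 [:: u; v] =
  \row_m \sum_i \sum_j u 0 i * v 0 j * (Q i j 0 m *+ 2).
Proof.
apply/rowP => m; rewrite /Dkf sum_tupleS summxE !mxE; apply: eq_bigr => i _.
rewrite sum_tupleS summxE; apply: eq_bigr => j _.
rewrite sum_tuple0 mxE !big_ord_recl big_ord0 /iter_partial_deriv /=.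
rewrite !partial_cubic_map cubic_map0 !(tnthS, tnth0) mulr1 mxE Q_sym.
by rewrite mulr2n.
Qed.

Lemma Dkf3_cubic_map (u v w : 'rV[R]_n) :
  Dkf (cubic_map a L Q T) 0 [:: u; v; w] =
  \row_m \sum_i \sum_j \sum_k u 0 i * v 0 j * w 0 k * (T i j k 0 m *+ 6).
Proof.
apply/rowP => m; rewrite /Dkf sum_tupleS summxE !mxE; apply: eq_bigr => i _.
rewrite sum_tupleS summxE; apply: eq_bigr => j _.
rewrite sum_tupleS summxE; apply: eq_bigr => k _.
rewrite sum_tuple0 mxE !big_ord_recl big_ord0 /iter_partial_deriv /=.
rewrite !partial_cubic_map cubic_map0 !(tnthS, tnth0) mulr1 !mulrA !mxE.
rewrite (T_sym23 k i j) (T_sym12 k j i) (T_sym23 j k i) -(T_sym12 i j k).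
by rewrite (T_sym23 i k j); ring.
Qed.

End CubicMapDerivatives.

Lemma coef_rVpolyM (R : comNzRingType) n (u v : 'rV[R]_n) k :
  (rVpoly u * rVpoly v)`_k = \sum_(i < n) \sum_(j < n | (i + j == k)%N) u 0 i * v 0 j.
Proof.
rewrite [X in rVpoly X](row_sum_delta u) [X in _ * rVpoly X](row_sum_delta v).
rewrite !linear_sum /= mulr_suml coef_sum; apply: eq_bigr => i _.
rewrite mulr_sumr (eq_bigr (fun j : 'I_n => (u 0 i * v 0 j) *: 'X^(i + j))).
  by rewrite coef_sumMXn.
by move=> j _; rewrite !linearZ /= !rVpoly_delta -scalerAl -scalerAr scalerA exprD.
Qed.

Lemma coefM_eq0 (R : nzSemiRingType) (p q : {poly R}) k :
  (forall j, (j <= k)%N -> q`_j = 0) -> (p * q)`_k = 0.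
Proof. by move=> q0; rewrite coefM big1 // => j _; rewrite q0 ?mulr0 ?leq_subr. Qed.

Lemma poly_eq0_coef_lt (R : nzSemiRingType) (p : {poly R}) N :
  (size p <= N)%N -> (forall k, (k < N)%N -> p`_k = 0) -> p = 0.
Proof.
move=> size_p p0; apply/polyP => k; rewrite coef0.
by case: (ltnP k N) => [/p0 // | N_le]; rewrite nth_default // (leq_trans size_p).
Qed.

Lemma first_nonzero_coef (R : nzSemiRingType) (q : {poly R}) :
  q != 0 -> exists2 j0, q`_j0 != 0 & forall j, (j < j0)%N -> q`_j = 0.
Proof.
move=> q_neq0; have q_nz : exists j, q`_j != 0.
  by exists (size q).-1; rewrite -lead_coefE lead_coef_eq0.
case: (ex_minnP q_nz) => j0 qj0 j0_min; exists j0 => // j ltj.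
by apply/eqP; apply: contraTT ltj => /j0_min; rewrite -leqNgt.
Qed.

Lemma rVpoly_eq0 (R : nzSemiRingType) n (v : 'rV[R]_n) : (rVpoly v == 0) = (v == 0).
Proof.
by apply/eqP/eqP => [v0|->]; [rewrite -(rVpolyK v) v0 | ]; rewrite linear0.
Qed.

Section TheoremMaps.
Variables (R : realType) (n : nat).
Local Notation e := (std_basis R).

Lemma thm_B_coef (u v : 'rV[R]_n) (p : 'I_(n + n)) :
  thm_B u v 0 p = if val p == 0%N then 0 else (rVpoly u * rVpoly v)`_(val p).-1.
Proof. by rewrite mxE coef_rVpolyM. Qed.

Lemma thm_BC (u v : 'rV[R]_n) : thm_B u v = thm_B v u.
Proof. by apply/rowP => p; rewrite !thm_B_coef mulrC. Qed.

Lemma thm_B_basis (i j : 'I_n) (p : 'I_(n + n)) :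
  thm_B (e i) (e j) 0 p = if val p == 0%N then 0 else ((val p).-1 == i + j)%N%:R.
Proof. by rewrite thm_B_coef /std_basis !rVpoly_delta -exprD coefXn. Qed.

Lemma thm_B_expand (u v : 'rV[R]_n) (p : 'I_(n + n)) :
  thm_B u v 0 p = \sum_i \sum_j u 0 i * v 0 j * thm_B (e i) (e j) 0 p.
Proof.
rewrite mxE; case: eqP => p0.
  by rewrite big1 // => i _; rewrite big1 // => j _; rewrite thm_B_basis p0 mulr0.
apply: eq_bigr => i _; rewrite big_mkcond; apply: eq_bigr => j _ /=.
by rewrite thm_B_basis (introF eqP p0) eq_sym; case: eqP; rewrite ?mulr1 ?mulr0.
Qed.

Lemma thm_C_lshift (x y z : 'rV[R]_n) (q : 'I_n) :
  thm_C x y z 0 (lshift n q) = x 0 q * y 0 q * z 0 q.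
Proof. by rewrite row_mxEl mxE. Qed.

Lemma thm_C_rshift (x y z : 'rV[R]_n) (q : 'I_n) : thm_C x y z 0 (rshift n q) = 0.
Proof. by rewrite row_mxEr mxE. Qed.

Lemma thm_CC12 (x y z : 'rV[R]_n) : thm_C x y z = thm_C y x z.
Proof. by congr row_mx; apply/rowP => q; rewrite !mxE [x 0 q * _]mulrC. Qed.

Lemma thm_CC23 (x y z : 'rV[R]_n) : thm_C x y z = thm_C x z y.
Proof. by congr row_mx; apply/rowP => q; rewrite !mxE mulrAC. Qed.

Lemma thm_C_expand (x y z : 'rV[R]_n) (p : 'I_(n + n)) :
  thm_C x y z 0 p =
  \sum_i \sum_j \sum_k x 0 i * y 0 j * z 0 k * thm_C (e i) (e j) (e k) 0 p.
Proof.
case: (split_ordP p) => [q ->|q ->]; last first.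
  rewrite thm_C_rshift big1 // => i _; rewrite big1 // => j _.
  by rewrite big1 // => k _; rewrite thm_C_rshift mulr0.
transitivity (\sum_i e q 0 i * (x 0 i * \sum_j e q 0 j * (y 0 j * \sum_k e q 0 k * z 0 k))).
  by rewrite thm_C_lshift !sum_std_basis_mulr mulrA.
apply: eq_bigr => i _; rewrite !mulr_sumr; apply: eq_bigr => j _.
rewrite !mulr_sumr; apply: eq_bigr => k _.
by rewrite thm_C_lshift !std_basisE ![(q == _)]eq_sym; ring.
Qed.

Definition thm_f_lin (i : 'I_n) : 'rV[R]_(n + (n + n)) := row_mx (e i) 0.
Definition thm_f_quad (i j : 'I_n) : 'rV[R]_(n + (n + n)) :=
  row_mx 0 (2^-1 *: thm_B (e i) (e j)).
Definition thm_f_cub (i j k : 'I_n) : 'rV[R]_(n + (n + n)) :=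
  row_mx 0 (6^-1 *: thm_C (e i) (e j) (e k)).

Lemma thm_f_cubic_map : @thm_f R n = cubic_map 0 thm_f_lin thm_f_quad thm_f_cub.
Proof.
apply/funext => x; apply/rowP => m; rewrite [RHS]mxE [in RHS]mxE add0r /thm_f.
case: (split_ordP m) => [q ->|p ->].
  rewrite row_mxEl /thm_f_lin /thm_f_quad /thm_f_cub.
  rewrite [X in _ + X + _]big1 => [|i _]; last first.
    by rewrite big1 // => j _; rewrite row_mxEl mxE mulr0.
  rewrite [X in _ + X]big1 => [|i _]; last first.
    by rewrite big1 // => j _; rewrite big1 // => k _; rewrite row_mxEl mxE mulr0.
  under eq_bigr do rewrite row_mxEl std_basisC.
  by rewrite sum_mulr_std_basis !addr0.
rewrite row_mxEr /thm_f_lin /thm_f_quad /thm_f_cub [LHS]mxE [X in X + _]mxE [X in _ + X]mxE.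
rewrite thm_B_expand thm_C_expand [X in _ = X + _ + _]big1 => [|i _]; last first.
  by rewrite row_mxEr mxE mulr0.
rewrite add0r !mulr_sumr; congr (_ + _); apply: eq_bigr => i _; rewrite !mulr_sumr.
  by apply: eq_bigr => j _; rewrite row_mxEr [X in _ = _ * X]mxE; ring.
apply: eq_bigr => j _; rewrite !mulr_sumr.
by apply: eq_bigr => k _; rewrite row_mxEr [X in _ = _ * X]mxE; ring.
Qed.

Lemma Dkf1_thm_f (v : 'rV[R]_n) : Dkf (@thm_f R n) 0 [:: v] = row_mx v 0.
Proof.
rewrite thm_f_cubic_map Dkf1_cubic_map; apply/rowP => m; rewrite [LHS]mxE.
case: (split_ordP m) => [q ->|q ->]; rewrite /thm_f_lin.
  under eq_bigr do rewrite row_mxEl std_basisC.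
  by rewrite sum_mulr_std_basis row_mxEl.
by rewrite big1 => [|i _]; rewrite row_mxEr mxE ?mulr0.
Qed.

Lemma Dkf2_thm_f (u v : 'rV[R]_n) :
  Dkf (@thm_f R n) 0 [:: u; v] = row_mx 0 (thm_B u v).
Proof.
rewrite thm_f_cubic_map Dkf2_cubic_map; last by move=> i j; rewrite /thm_f_quad thm_BC.
apply/rowP => m; rewrite [LHS]mxE.
case: (split_ordP m) => [q ->|p ->]; rewrite /thm_f_quad.
  rewrite row_mxEl mxE big1 // => i _; rewrite big1 // => j _.
  by rewrite row_mxEl mxE mul0rn mulr0.
rewrite row_mxEr thm_B_expand; apply: eq_bigr => i _; apply: eq_bigr => j _.
by rewrite row_mxEr [X in X *+ 2]mxE; field.
Qed.

Lemma Dkf3_thm_f (v : 'rV[R]_n) :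
  Dkf (@thm_f R n) 0 [:: v; v; v] = row_mx 0 (thm_C v v v).
Proof.
rewrite thm_f_cubic_map Dkf3_cubic_map; first last.
- by move=> i j k; rewrite /thm_f_cub thm_CC23.
- by move=> i j k; rewrite /thm_f_cub thm_CC12.
apply/rowP => m; rewrite [LHS]mxE.
case: (split_ordP m) => [q ->|p ->]; rewrite /thm_f_cub.
  rewrite row_mxEl mxE big1 // => i _; rewrite big1 // => j _; rewrite big1 // => k _.
  by rewrite row_mxEl mxE mul0rn mulr0.
rewrite row_mxEr thm_C_expand; apply: eq_bigr => i _; apply: eq_bigr => j _.
by apply: eq_bigr => k _; rewrite row_mxEr [X in X *+ 6]mxE; field.
Qed.

Lemma thm_B_add_thm_C_eq0 (u v : 'rV[R]_n) (lam : R) :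
  thm_B u v + lam *: thm_C v v v = 0 -> v != 0 -> u = 0 /\ lam = 0.
Proof.
move=> BC0 v_neq0.
have BC0_at (m : 'I_(n + n)) : thm_B u v 0 m + lam * thm_C v v v 0 m = 0.
  by move: BC0; set B := thm_B u v; set C := thm_C v v v => /rowP/(_ m); rewrite !mxE.
set p := rVpoly u; set q := rVpoly v.
have q_neq0 : q != 0 by rewrite rVpoly_eq0.
have [j0 qj0 j0_min] := first_nonzero_coef q_neq0.
have j0_lt : (j0 < n)%N.
  apply: contraNT qj0; rewrite -leqNgt => n_le.
  by rewrite nth_default // (leq_trans (size_poly _ _) n_le).
have lam0 : lam = 0.
  have := BC0_at (lshift n (Ordinal j0_lt)); rewrite thm_B_coef thm_C_lshift /=.
  rewrite -coef_rVpoly_ord /= -/q.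
  have -> : (if j0 == 0%N then 0 else (p * q)`_j0.-1) = 0.
    case: ifP => // j0_neq0; apply: coefM_eq0 => j le_j; apply: j0_min.
    by rewrite (leq_ltn_trans le_j) // prednK // lt0n j0_neq0.
  by rewrite add0r => /eqP; rewrite !mulf_eq0 (negbTE qj0) !orbF => /eqP.
split=> //.
have pq0 : p * q = 0.
  apply: (@poly_eq0_coef_lt _ _ (n + n).-1) => [|k k_lt].
    have size_p : (size p <= n)%N := size_poly _ _.
    have size_q : (size q <= n)%N := size_poly _ _.
    by apply: leq_trans (size_polyMleq p q) _; lia.
  have k1_lt : (k.+1 < n + n)%N by lia.
  by have := BC0_at (Ordinal k1_lt); rewrite lam0 mul0r addr0 thm_B_coef.
by apply/eqP; move/eqP: pq0; rewrite mulf_eq0 (negbTE q_neq0) orbF rVpoly_eq0.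
Qed.

End TheoremMaps.

Theorem theorem3p1 (R : realType) (n : nat) (hn : (0 < n)%N)
  (v1 v2 v3 : 'rV[R]_n) (lam : R) :
  Dkf (@thm_f R n) 0 [:: v1] + Dkf (@thm_f R n) 0 [:: v2; v3]
    + lam *: Dkf (@thm_f R n) 0 [:: v3; v3; v3] = 0 ->
  v3 != 0 ->
  v1 = 0 /\ v2 = 0 /\ lam = 0.
Proof.
rewrite Dkf1_thm_f Dkf2_thm_f Dkf3_thm_f scale_row_mx scaler0 !add_row_mx.
rewrite !addr0 add0r -[0 in RHS]row_mx0 => /eq_row_mx[v1_0 BC0] v3_neq0.
by have [v2_0 lam0] := thm_B_add_thm_C_eq0 BC0 v3_neq0.
Qed.
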